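(* With the convention $W_0(t)=2$, the generating function $W(t,z)=\sum_{n\ge 0}W_n(t)z^n$ is \[ W(t,z)=\frac{2-2z^2}{1-z-2z^2-2(t-1)z^3}. \]
   Context: Seating model. A circular table has $n\ge 1$ seats, with exactly one napkin between each pair of adjacent seats ($n$ napkins in total). ''Left'' and ''right'' are from the perspective of a seated diner. Diners $1,\dots,n$ arrive in this order and a maitre d' chooses a seat for each. A preference order is $\sigma=(\sigma_1,\dots,\sigma_n)\in\{-1,1\}^n$, where $\sigma_j=+1$ means diner $j$ prefers the napkin on their right and $\sigma_j=-1$ the napkin on their left. When diner $j$ is seated, they take their preferred adjacent napkin if it is still on the table; otherwise the other adjacent napkin if still on the table; otherwise they are napkinless. The maitre d' observes which napkin each seated diner takes. The ''previous diner'' means the most recently seated diner. Algorithm $W$ (trap setting). Seat diner 1; the primary direction $d\in\{\text{left},\text{right}\}$ is the side of the napkin diner 1 takes. All movement below is in direction $d$. (W1) If the two seats at distance 1 and 2 in direction $d$ from the previous diner's seat are both empty, go to W2; otherwise go to W4. (W2) If the previous diner took the napkin on their side $d$, seat the next diner two seats in direction $d$ from the previous diner and return to W1; otherwise go to W3. (W3) Seat the next diner one seat in direction $d$ from the previous diner and return to W1. (W4) Seat all remaining diners, one at a time in order of arrival, in the empty seats, in the order in which these seats are encountered moving in direction $d$ starting from diner 1's seat. For $n\ge1$, $\nu_W(\sigma)$ is the number of napkinless diners when the $n$ diners with preference order $\sigma$ are seated at the circular table with $n$ seats by algorithm $W$, and $W_n(t)=\sum_{\sigma\in\{-1,1\}^n}t^{\nu_W(\sigma)}$.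 *)

From mathcomp Require Import all_boot all_order all_algebra.
Set Implicit Arguments. Unset Strict Implicit. Unset Printing Implicit Defensive.
Import GRing.Theory.
Local Open Scope ring_scope.

(* Napkin k lies between seat k and seat k+1 (mod n).  Directions are encoded
   by booleans: true = right, false = left.  Moving right from seat s leads to
   seat s+1, moving left to seat s-1 (mod n); hence the napkin on the right of
   seat s is napkin s and the napkin on its left is napkin s-1.
   A preference order sigma in {-1,1}^n is encoded as a sequence of n booleans
   (true <-> +1 = right, false <-> -1 = left), the j-th entry for diner j+1. *)

Definition stepS (n : nat) (e : bool) (s : nat) : nat :=
  if e then (s.+1 %% n)%N else ((s + n).-1 %% n)%N.

Definition napkinS (n : nat) (e : bool) (s : nat) : nat :=
  if e then s else ((s + n).-1 %% n)%N.

Record wstate := WState {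
  occ : nat -> bool;
  nap : nat -> bool;           (* napkin still on the table? *)
  prev : nat;                  (* seat of the previous diner *)
  prevside : option bool;      (* side of the napkin taken by previous diner *)
  w4 : bool;                   (* algorithm has entered step W4 *)
  cnt : nat                    (* number of napkinless diners so far *)
}.

Definition seat_diner (n : nat) (st : wstate) (s : nat) (p : bool) (enter4 : bool)
  : wstate :=
  let k1 := napkinS n p s in
  let k2 := napkinS n (~~ p) s in
  let occ' := fun x => (x == s) || occ st x in
  if nap st k1 then
    WState occ' (fun k => (k != k1) && nap st k) s (Some p) enter4 (cnt st)
  else if nap st k2 then
    WState occ' (fun k => (k != k2) && nap st k) s (Some (~~ p)) enter4 (cnt st)
  else WState occ' (nap st) s None enter4 (cnt st).+1.

Definition first_empty (n : nat) (e : bool) (st : wstate) : nat :=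
  head 0%N [seq x <- [seq iter k (stepS n e) 0%N | k <- iota 0 n] | ~~ occ st x].

Definition W_step (n : nat) (e : bool) (st : wstate) (p : bool) : wstate :=
  if w4 st then seat_diner n st (first_empty n e st) p true
  else
    let s1 := stepS n e (prev st) in
    let s2 := stepS n e s1 in
    if ~~ occ st s1 && ~~ occ st s2 then
      if prevside st == Some e then seat_diner n st s2 p false
      else seat_diner n st s1 p false
    else seat_diner n st (first_empty n e st) p true.

(* nu_W(sigma): number of napkinless diners. Diner 1 sits at seat 0 and takes
   the napkin on his preferred side (all napkins are present); this side is
   the primary direction d. *)
Definition nuW (n : nat) (sigma : seq bool) : nat :=
  match sigma with
  | [::] => 0%N
  | p1 :: rest =>
    let st0 := WState (fun x => x == 0%N) (fun k => k != napkinS n p1 0%N)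
                      0%N (Some p1) false 0%N in
    cnt (foldl (W_step n p1) st0 rest)
  end.

Definition Wpoly (n : nat) : {poly int} :=
  if n == 0%N then 2%:P
  else \sum_(sigma : n.-tuple bool) 'X^(nuW n sigma).

Definition Dcoef (i : nat) : {poly int} :=
  nth 0 [:: 1; -1; -2%:P; - (2%:P * ('X - 1))] i.
Definition Ncoef (m : nat) : {poly int} :=
  nth 0 [:: 2%:P; 0; -2%:P] m.

From Pilot Require Import Defs.
From mathcomp Require Import all_boot all_order all_algebra.
From mathcomp Require Import zify ring.
Import GRing.Theory.

(* Measure positions from diner 1's seat in the primary direction d.  Steps
   W1-W3 seat diners at increasing positions, skipping one seat exactly when
   the previous diner took his napkin on side d.  The skipped seat has then
   lost the napkin it shares with that diner, and it loses the other one iff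
   the next diner prefers the side opposite to d.  Every empty seat is
   isolated, so in step W4 the napkinless diners are exactly those seated at
   these trapped seats.  Hence nu_W depends only on which of diners 2..n
   prefer d, through the number [trap_count] of trapped seats.  Its
   generating polynomials f_r = [trap_gf r true r] and g_r = [trap_gf r false r]
   satisfy f_(r+2) = 2 f_r + 2t g_r and g_(r+1) = f_r + g_r, and
   W_(k+1) = 2 f_k.  Eliminating g gives
   W_(m+3) = W_(m+2) + 2 W_(m+1) + 2(t-1) W_m, the recurrence encoded by the
   denominator 1 - z - 2z^2 - 2(t-1)z^3. *)

Set Implicit Arguments.
Unset Strict Implicit.
Unset Printing Implicit Defensive.

Lemma occ_seat_diner n st s p b x :
  occ (seat_diner n st s p b) x = (x == s) || occ st x.
Proof. by rewrite /seat_diner; case: ifP => _ //; case: ifP. Qed.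

Lemma w4_seat_diner n st s p b : w4 (seat_diner n st s p b) = b.
Proof. by rewrite /seat_diner; case: ifP => _ //; case: ifP. Qed.

Lemma prev_seat_diner n st s p b : Defs.prev (seat_diner n st s p b) = s.
Proof. by rewrite /seat_diner; case: ifP => _ //; case: ifP. Qed.

Lemma seat_diner_pref n st s p b : nap st (napkinS n p s) ->
  let st' := seat_diner n st s p b in
  [/\ cnt st' = cnt st, prevside st' = Some p &
      forall k, nap st' k = (k != napkinS n p s) && nap st k].
Proof. by move=> h; rewrite /seat_diner h. Qed.

Lemma modn_small_sub d x : (d <= x < d + d)%N -> (x %% d = x - d)%N.
Proof. by move=> /andP[h1 h2]; rewrite -{1}(subnK h1) modnDr modn_small //; lia. Qed.

Section AlgorithmW.
Variables (n : nat) (e : bool).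

(* Coordinates along the primary direction [e]: [seat_at k] is reached from
   seat 0 by [k] steps in direction [e], and [napkin_at k] is the napkin
   between [seat_at k] and [seat_at (cyc_next k)]. *)
Definition seat_at (k : nat) : nat := if e then k else ((n - k) %% n)%N.
Definition napkin_at (k : nat) : nat := if e then k else (n.-1 - k)%N.
Definition cyc_next (k : nat) : nat := if k.+1 == n then 0%N else k.+1.
Definition cyc_prev (k : nat) : nat := if k == 0%N then n.-1 else k.-1.

Lemma seat_at0 : seat_at 0 = 0%N.
Proof. by rewrite /seat_at subn0 modnn; case: e. Qed.

Lemma eq_seat_at a b : (a < n)%N -> (b < n)%N -> (seat_at a == seat_at b) = (a == b).
Proof.
rewrite /seat_at; case: e => // ha hb.
by case: a ha => [|a] ha; case: b hb => [|b] hb; rewrite ?subn0 ?modnn // ?modn_small; lia.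
Qed.

Lemma eq_napkin_at a b : (a < n)%N -> (b < n)%N -> (napkin_at a == napkin_at b) = (a == b).
Proof. by rewrite /napkin_at; case: e => // ha hb; apply/eqP/eqP; lia. Qed.

Lemma cyc_next_lt k : (k < n)%N -> (cyc_next k < n)%N.
Proof. by rewrite /cyc_next; case: eqP; lia. Qed.

Lemma cyc_prev_lt k : (k < n)%N -> (cyc_prev k < n)%N.
Proof. by rewrite /cyc_prev; case: eqP; lia. Qed.

Lemma cyc_prev_inj a b : (a < n)%N -> (b < n)%N -> cyc_prev a = cyc_prev b -> a = b.
Proof. by rewrite /cyc_prev; do 2 case: eqP; lia. Qed.

Lemma cyc_prevK a b : (a < n)%N -> (b < n)%N -> cyc_prev a = b -> a = cyc_next b.
Proof. by rewrite /cyc_prev /cyc_next; do 2 case: eqP; lia. Qed.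

Lemma stepS_seat_at k : (k < n)%N -> stepS n e (seat_at k) = seat_at (cyc_next k).
Proof.
rewrite /stepS /seat_at /cyc_next; case: e => hk.
  by case: eqP => h; [rewrite h modnn | rewrite modn_small //; lia].
case: k hk => [|k] hk.
  rewrite subn0 modnn add0n.
  by case: eqP => h; [rewrite -h | rewrite !modn_small; lia].
rewrite (modn_small (_ : n - k.+1 < n)%N); last lia.
rewrite modn_small_sub; last lia.
by case: eqP => h; [rewrite subn0 modnn; lia | rewrite modn_small; lia].
Qed.

Lemma napkinS_seat_at p k : (k < n)%N ->
  napkinS n p (seat_at k) = napkin_at (if p == e then k else cyc_prev k).
Proof.
rewrite /napkinS /seat_at /napkin_at /cyc_prev.
case: p; case: e => //= hk; case: k hk => [|k] hk /=; rewrite ?subn0 ?modnn ?add0n.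
all: try (rewrite (modn_small (_ : n - k.+1 < n)%N); last lia).
all: first [lia | rewrite modn_small; lia | rewrite modn_small_sub; lia].
Qed.

Lemma iter_stepS0 k : (k < n)%N -> iter k (stepS n e) 0%N = seat_at k.
Proof.
elim: k => [|k IH] hk /=; first by rewrite seat_at0.
rewrite IH ?stepS_seat_at; try lia.
by rewrite /cyc_next; case: eqP; lia.
Qed.

Lemma occ_seat_diner_at st g p b i : (g < n)%N -> (i < n)%N ->
  occ (seat_diner n st (seat_at g) p b) (seat_at i) = (i == g) || occ st (seat_at i).
Proof. by move=> hg hi; rewrite occ_seat_diner eq_seat_at. Qed.

Lemma nap_seat_diner st g p b : (g < n)%N ->
  exists2 t, (t == g) || (t == cyc_prev g) &
    forall i, (i < n)%N ->
      nap (seat_diner n st (seat_at g) p b) (napkin_at i) = (i != t) && nap st (napkin_at i).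
Proof.
move=> hg; rewrite /seat_diner !napkinS_seat_at //.
have lt_choice q : ((if q then g else cyc_prev g) < n)%N by case: q; rewrite ?cyc_prev_lt.
case: ifP => [_|h1]; last case: ifP => [_|h2] /=.
- exists (if p == e then g else cyc_prev g); first by case: (p == e); rewrite eqxx ?orbT.
  by move=> i hi /=; rewrite (eq_napkin_at hi).
- exists (if ~~ p == e then g else cyc_prev g); first by case: (~~ p == e); rewrite eqxx ?orbT.
  by move=> i hi /=; rewrite (eq_napkin_at hi).
- exists g; rewrite ?eqxx // => i hi.
  have [->|//] := eqVneq i g; rewrite andFb.
  by move: h1 h2; case: p; case: (e) => /= h1 h2; rewrite ?h1 ?h2.
Qed.

Lemma cnt_seat_diner st g p b : (g < n)%N ->
  cnt (seat_diner n st (seat_at g) p b) =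
    (cnt st + (~~ nap st (napkin_at g) && ~~ nap st (napkin_at (cyc_prev g))))%N.
Proof.
move=> hg; rewrite /seat_diner !napkinS_seat_at //.
by case: p; case: (e) => /=; case: (nap st (napkin_at g));
  case: (nap st (napkin_at (cyc_prev g))); rewrite ?addn0 ?addn1.
Qed.

Definition empty_at st i := ~~ occ st (seat_at i).

(* Whoever is eventually seated at a trapped seat is napkinless. *)
Definition trapped st i :=
  [&& empty_at st i, ~~ nap st (napkin_at i) & ~~ nap st (napkin_at (cyc_prev i))].

Definition n_empty st := (\sum_(i < n) empty_at st i)%N.

Definition final_count st := (cnt st + \sum_(i < n) trapped st i)%N.

Definition empty_isolated st := forall i, (i < n)%N -> empty_at st i ->
  occ st (seat_at (cyc_prev i)) && occ st (seat_at (cyc_next i)).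

Lemma empty_at_seat_diner st g p b i : (g < n)%N -> (i < n)%N ->
  empty_at (seat_diner n st (seat_at g) p b) i = (i != g) && empty_at st i.
Proof. by move=> hg hi; rewrite /empty_at occ_seat_diner_at // negb_or. Qed.

Lemma n_empty_seat_diner st g p b : (g < n)%N -> empty_at st g ->
  n_empty st = (n_empty (seat_diner n st (seat_at g) p b)).+1.
Proof.
move=> hg hemp; rewrite /n_empty (bigD1 (Ordinal hg)) // [in RHS](bigD1 (Ordinal hg)) //=.
rewrite empty_at_seat_diner // eqxx hemp; congr _.+1; apply: eq_bigr => i hig.
by rewrite (empty_at_seat_diner _ _ _ hg (ltn_ord i)) hig.
Qed.

Lemma n_empty_neq0 st : n_empty st != 0%N -> exists2 g, (g < n)%N & empty_at st g.
Proof.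
rewrite /n_empty sum_nat_eq0 negb_forall => /existsP[i hi].
by exists i => //; move: hi; case: empty_at.
Qed.

Lemma final_count_full st : n_empty st = 0%N -> final_count st = cnt st.
Proof.
move/eqP; rewrite /n_empty sum_nat_eq0 => /forallP full.
by rewrite /final_count big1 ?addn0 // => i _; move: (full i); rewrite /trapped; case: empty_at.
Qed.

Lemma empty_isolated_seat_diner st s p b :
  empty_isolated st -> empty_isolated (seat_diner n st s p b).
Proof.
move=> iso i hi; rewrite /empty_at !occ_seat_diner => /norP[_ /(iso i hi)] /andP[-> ->].
by rewrite !orbT.
Qed.

Lemma trapped_seat_isolated st g p b i : empty_isolated st -> (g < n)%N -> empty_at st g ->
  (i < n)%N -> i != g -> trapped (seat_diner n st (seat_at g) p b) i = trapped st i.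
Proof.
move=> iso hg hemp hi hig.
have [t ht nap_t] := nap_seat_diner st p b hg.
rewrite /trapped empty_at_seat_diner // hig /=.
case emp_i: (empty_at st i) => //=.
have /andP[occ_prev occ_next] := iso g hg hemp.
have hit : i != t.
  apply/eqP => hit; move: ht; rewrite -hit (negbTE hig) /= => /eqP hip.
  by move: occ_prev emp_i; rewrite /empty_at -hip => ->.
have hpit : cyc_prev i != t.
  apply/eqP => hpit; case/orP: ht => /eqP htg; rewrite htg in hpit.
    by move: occ_next emp_i; rewrite /empty_at -(cyc_prevK hi hg hpit) => ->.
  by move: hig; rewrite (cyc_prev_inj hi hg hpit) eqxx.
by rewrite !nap_t ?cyc_prev_lt // hit hpit.
Qed.

Lemma final_count_seat_isolated st g p b : empty_isolated st -> (g < n)%N -> empty_at st g ->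
  final_count (seat_diner n st (seat_at g) p b) = final_count st.
Proof.
move=> iso hg hemp; rewrite /final_count cnt_seat_diner // -addnA; congr (_ + _)%N.
rewrite (bigD1 (Ordinal hg)) // [in RHS](bigD1 (Ordinal hg)) //=.
have -> : trapped (seat_diner n st (seat_at g) p b) g = false.
  by rewrite /trapped (empty_at_seat_diner _ _ _ hg hg) eqxx.
rewrite {2}/trapped hemp add0n; congr (_ + _)%N.
by apply: eq_bigr => i hig; rewrite (trapped_seat_isolated p b iso hg hemp (ltn_ord i) hig).
Qed.

Lemma first_empty_seat st g0 : (g0 < n)%N -> empty_at st g0 ->
  exists g, [/\ (g < n)%N, first_empty n e st = seat_at g & empty_at st g].
Proof.
move=> hg0 hemp0; rewrite /first_empty.
have -> : [seq iter k (stepS n e) 0%N | k <- iota 0 n] = [seq seat_at k | k <- iota 0 n].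
  by apply/eq_in_map => k; rewrite mem_iota => /andP[_ hk]; rewrite iter_stepS0.
set s := [seq x <- _ | _].
have : seat_at g0 \in s by rewrite mem_filter map_f ?mem_iota ?andbT.
case hs: s => [//|x s'] _ /=.
have : x \in s by rewrite hs mem_head.
rewrite /s mem_filter => /andP[hx /mapP[g]]; rewrite mem_iota => /andP[_ hg] hxg.
by exists g; rewrite /empty_at -hxg.
Qed.

Lemma cnt_w4_phase rest st : empty_isolated st -> size rest = n_empty st ->
  W_step n e st =1 (fun p => seat_diner n st (first_empty n e st) p true) ->
  cnt (foldl (W_step n e) st rest) = final_count st.
Proof.
elim: rest st => [|p r IH] st iso hsize hstep /=; first by rewrite final_count_full.
have [g0 hg0 hemp0] : exists2 g, (g < n)%N & empty_at st g by apply: n_empty_neq0; rewrite -hsize.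
have [g [hg hfirst hemp]] := first_empty_seat hg0 hemp0.
rewrite hstep hfirst IH.
- exact: final_count_seat_isolated.
- exact: empty_isolated_seat_diner.
- by move: hsize; rewrite (n_empty_seat_diner p true hg hemp) => -[].
- by move=> q; rewrite /W_step w4_seat_diner.
Qed.

Record trap_inv st j c : Prop := TrapInv {
  trap_lt : (j < n)%N;
  trap_w4 : w4 st = false;
  trap_prev : Defs.prev st = seat_at j;
  trap_side : (prevside st == Some e) = c;
  trap_occ0 : occ st (seat_at 0);
  trap_occj : occ st (seat_at j);
  trap_empty_gt : forall i, (j < i < n)%N -> empty_at st i;
  trap_isolated_lt : forall i, (i < j)%N -> empty_at st i ->
    occ st (seat_at (cyc_prev i)) && occ st (seat_at (cyc_next i));
  trap_nap_gt : forall i, (j < i < n)%N -> nap st (napkin_at i);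
  trap_nap : nap st (napkin_at j) = ~~ c }.

(* The number of seats trapped by steps W1-W3 when [r] seats lie beyond the
   previous diner, who took his napkin on side [e] iff [c], and [xs] tells
   which of the following diners prefer side [e]. *)
Fixpoint trap_count (r : nat) (c : bool) (xs : seq bool) : nat :=
  if xs is x :: xs' then
    if (2 <= r)%N then ((c && ~~ x) + trap_count (r - (if c then 2 else 1)) x xs')%N
    else 0%N
  else 0%N.

Lemma trap_count_small r c xs : (r <= 1)%N -> trap_count r c xs = 0%N.
Proof. by case: xs => //= x xs h; rewrite leqNgt ltnS h. Qed.

Section TrapStep.
Variables (st : wstate) (j : nat) (c p : bool).
Hypotheses (inv : trap_inv st j c) (room : (j.+2 < n)%N).

Let j' := if c then j.+2 else j.+1.
Let st' := seat_diner n st (seat_at j') p false.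

Lemma W_step_trap : W_step n e st p = st'.
Proof.
have next_j : cyc_next j = j.+1 by rewrite /cyc_next; case: eqP; lia.
have next_j1 : cyc_next j.+1 = j.+2 by rewrite /cyc_next; case: eqP; lia.
have /negbTE occ1 : ~~ occ st (seat_at j.+1) by apply: (trap_empty_gt inv); lia.
have /negbTE occ2 : ~~ occ st (seat_at j.+2) by apply: (trap_empty_gt inv); lia.
rewrite /W_step (trap_w4 inv) (trap_prev inv) stepS_seat_at ?next_j ?stepS_seat_at ?next_j1;
  try lia.
by rewrite occ1 occ2 (trap_side inv) /st' /j'; case: (c).
Qed.

Lemma nap_pref_trap : nap st (napkinS n p (seat_at j')).
Proof.
have prev_j' : cyc_prev j' = j'.-1 by rewrite /cyc_prev /j'; case: (c).
rewrite napkinS_seat_at ?prev_j' /j'; last by case: (c); lia.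
case: (p == e); case: (c) (trap_nap inv) => //= _; apply: (trap_nap_gt inv); lia.
Qed.

Lemma nap_trap_step i : (i < n)%N ->
  nap st' (napkin_at i) = (i != if p == e then j' else j'.-1) && nap st (napkin_at i).
Proof.
have [_ _ ->] := seat_diner_pref false nap_pref_trap.
have prev_j' : cyc_prev j' = j'.-1 by rewrite /cyc_prev /j'; case: (c).
move=> hi; rewrite napkinS_seat_at ?prev_j' ?eq_napkin_at // /j'.
all: by case: (p == e); case: (c) => /=; lia.
Qed.

Lemma trap_inv_step : trap_inv st' j' (p == e).
Proof.
have [_ _ _ _ hocc0 hoccj hempty hiso hnap_gt hnap] := inv.
have [j_lt_j' j'_le] : (j < j')%N /\ (j' <= j.+2)%N by rewrite /j'; case: (c).
have hj' : (j' < n)%N by lia.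
have [_ side' _] := seat_diner_pref false nap_pref_trap.
split.
- exact: hj'.
- exact: w4_seat_diner.
- exact: prev_seat_diner.
- by rewrite side' (inj_eq (@Some_inj _)).
- by rewrite occ_seat_diner_at ?hocc0 ?orbT //; lia.
- by rewrite occ_seat_diner_at ?eqxx.
- move=> i /andP[hi1 hi2]; rewrite empty_at_seat_diner // hempty; last lia.
  by rewrite andbT; apply/eqP; lia.
- move=> i hi; rewrite empty_at_seat_diner; try lia.
  case/andP=> hij' hemp_i.
  rewrite !occ_seat_diner_at ?cyc_prev_lt ?cyc_next_lt //; try lia.
  have [hij|hji] := ltnP i j; first by case/andP: (hiso i hij hemp_i) => -> ->; rewrite !orbT.
  have [eij|nij] := eqVneq i j; first by move: hemp_i; rewrite eij /empty_at hoccj.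
  have -> : i = j.+1 by lia.
  have -> : cyc_next j.+1 = j' by rewrite /cyc_next; case: eqP; lia.
  by rewrite /cyc_prev /= hoccj eqxx orbT.
- move=> i /andP[hi1 hi2]; rewrite nap_trap_step // hnap_gt; last lia.
  by rewrite andbT; case: (p == e); apply/eqP; lia.
- rewrite nap_trap_step //; case: (p == e); rewrite ?eqxx //=.
  by rewrite hnap_gt ?andbT; [apply/eqP | apply/andP; split]; lia.
Qed.

Lemma n_empty_trap_step : n_empty st = (n_empty st').+1.
Proof.
have [j_lt_j' j'_le] : (j < j')%N /\ (j' <= j.+2)%N by rewrite /j'; case: (c).
by apply: n_empty_seat_diner; [|apply: (trap_empty_gt inv)]; lia.
Qed.

Lemma trapped_trap_step i : (i < n)%N ->
  trapped st' i = (if i == j.+1 then c && (p != e) else trapped st i).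
Proof.
have [_ _ _ _ hocc0 hoccj hempty _ hnap_gt hnap] := inv.
have j'E : j' = (j.+1 + c)%N by rewrite /j'; case: (c); rewrite ?addn1 ?addn0.
move=> hi; rewrite /trapped empty_at_seat_diner ?nap_trap_step ?cyc_prev_lt; try lia.
have [i_lt|i_gt|->] := ltngtP i j.
- rewrite [RHS]ifN_eq; last lia.
  have [emp_i|_] := boolP (empty_at st i); rewrite ?andbF //.
  have i_gt0 : (0 < i)%N by case: i emp_i {hi i_lt} => //; rewrite /empty_at hocc0.
  have -> : cyc_prev i = i.-1 by rewrite /cyc_prev; case: eqP; lia.
  by case: (p == e); lia.
- have -> : cyc_prev i = i.-1 by rewrite /cyc_prev; case: eqP; lia.
  rewrite hempty ?(hnap_gt i); try lia.
  have [->|ne_j1] := eqVneq i j.+1.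
    by rewrite /= hnap; case: (p == e); lia.
  by rewrite hnap_gt; [case: (p == e); lia | lia].
- by rewrite /empty_at hoccj !andbF [RHS]ifN_eq //; lia.
Qed.

Lemma final_count_trap_step : final_count st' = (final_count st + (c && (p != e)))%N.
Proof.
have hj1 : (j.+1 < n)%N by lia.
have [cnt' _ _] := seat_diner_pref false nap_pref_trap.
rewrite /final_count cnt' -addnA; congr (_ + _)%N.
rewrite (bigD1 (Ordinal hj1)) // [in RHS](bigD1 (Ordinal hj1)) //=.
have -> : trapped st j.+1 = false by rewrite /trapped (trap_nap_gt inv) ?andbF //; lia.
rewrite (trapped_trap_step hj1) eqxx add0n addnC; congr (_ + _)%N.
by apply: eq_bigr => i hi; rewrite (trapped_trap_step (ltn_ord i)) (ifN_eq _ _ hi).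
Qed.

End TrapStep.

Lemma trap_inv_end_isolated st j c : trap_inv st j c -> (n <= j.+2)%N -> empty_isolated st.
Proof.
case=> _ _ _ _ hocc0 hoccj _ hiso _ _ hend i hi emp_i.
have [i_lt|i_ge] := ltnP i j; first exact: hiso.
have [eij|nij] := eqVneq i j; first by move: emp_i; rewrite eij /empty_at hoccj.
have -> : cyc_prev i = j by rewrite /cyc_prev; case: eqP; lia.
have -> : cyc_next i = 0%N by rewrite /cyc_next; case: eqP; lia.
by rewrite hoccj hocc0.
Qed.

Lemma W_step_trap_end st j c : trap_inv st j c -> (n <= j.+2)%N ->
  W_step n e st =1 (fun p => seat_diner n st (first_empty n e st) p true).
Proof.
case=> hj hw hprev _ hocc0 _ _ _ _ _ hend p.
have blocked : occ st (stepS n e (seat_at j)) || occ st (stepS n e (stepS n e (seat_at j))).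
  rewrite !stepS_seat_at ?cyc_next_lt //.
  have [j_last|j_not_last] := eqVneq j.+1 n.
    by rewrite /cyc_next j_last eqxx hocc0.
  have -> : cyc_next (cyc_next j) = 0%N by rewrite /cyc_next (negbTE j_not_last); case: eqP; lia.
  by rewrite hocc0 orbT.
by rewrite /W_step hw hprev; case/orP: blocked => ->; rewrite ?andbF.
Qed.

Lemma cnt_trap_phase rest st j c : trap_inv st j c -> size rest = n_empty st ->
  cnt (foldl (W_step n e) st rest) =
    (final_count st + trap_count (n.-1 - j) c [seq p == e | p <- rest])%N.
Proof.
elim: rest st j c => [|p r IH] st j c inv hsize; first by rewrite /= addn0 final_count_full.
have [room|hend] := ltnP j.+2 n; last first.
  rewrite trap_count_small ?addn0; last lia.
  exact: cnt_w4_phase (trap_inv_end_isolated inv hend) hsize (W_step_trap_end inv hend).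
rewrite /= (W_step_trap p inv room) (IH _ _ _ (trap_inv_step p inv room)); last first.
  by move: hsize; rewrite (n_empty_trap_step p inv room) => -[].
rewrite (final_count_trap_step p inv room) -addnA (_ : (1 < n.-1 - j)%N = true); last lia.
by congr (_ + (_ + trap_count _ _ _))%N; case: (c); lia.
Qed.

Hypothesis n_gt0 : (0 < n)%N.

Definition start_state :=
  WState (fun x => x == 0%N) (fun k => k != napkinS n e 0%N) 0%N (Some e) false 0%N.

Lemma empty_at_start i : (i < n)%N -> empty_at start_state i = (i != 0%N).
Proof. by move=> hi; rewrite /empty_at /= -{1}seat_at0 eq_seat_at. Qed.

Lemma trap_inv_start : trap_inv start_state 0 true.
Proof.
have nap0 : napkinS n e 0%N = napkin_at 0 by rewrite -{1}seat_at0 napkinS_seat_at ?eqxx.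
split => //=; rewrite ?seat_at0 ?eqxx //.
- by move=> i /andP[i_gt0 hi]; rewrite empty_at_start //; lia.
- by move=> i /andP[i_gt0 hi]; rewrite nap0 eq_napkin_at //; lia.
- by rewrite nap0 eqxx.
Qed.

Lemma n_empty_start : n_empty start_state = n.-1.
Proof.
rewrite /n_empty (eq_bigr (fun i : 'I_n => nat_of_bool (val i != 0%N))); last first.
  by move=> i _; rewrite empty_at_start.
rewrite -(big_mkord xpredT (fun i => nat_of_bool (i != 0%N))) big_ltn //= add0n.
by rewrite (eq_big_nat _ _ (F2 := fun _ => 1%N)) ?sum_nat_const_nat ?muln1 ?subn1 // => i; lia.
Qed.

Lemma final_count_start : final_count start_state = 0%N.
Proof.
rewrite /final_count big1 // => i _; have [i0|i_gt0] := posnP i.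
  by rewrite /trapped i0 /empty_at (trap_occ0 trap_inv_start).
by rewrite /trapped (trap_nap_gt trap_inv_start) ?andbF // i_gt0 ltn_ord.
Qed.

Lemma nuW_primary rest : size rest = n.-1 ->
  nuW n (e :: rest) = trap_count n.-1 true [seq p == e | p <- rest].
Proof.
move=> hsize; rewrite /nuW -/start_state (cnt_trap_phase trap_inv_start).
  by rewrite final_count_start subn0.
by rewrite n_empty_start.
Qed.

End AlgorithmW.

Local Open Scope ring_scope.

Lemma big_tuple_cons (R : nmodType) (T : finType) L (F : seq T -> R) :
  \sum_(t : L.+1.-tuple T) F t = \sum_(x : T) \sum_(t : L.-tuple T) F (x :: t).
Proof.
rewrite pair_big /= (reindex (fun u : T * L.-tuple T => [tuple of u.1 :: u.2])) /=.
  by apply: eq_bigr => -[x t].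
exists (fun t : L.+1.-tuple T => (thead t, [tuple of behead t])).
  by move=> [x t] _ /=; congr (_, _); apply: val_inj.
by move=> t _; rewrite [RHS]tuple_eta.
Qed.

Definition trap_gf r c L : {poly int} := \sum_(t : L.-tuple bool) 'X^(trap_count r c t).

Lemma trap_gf_small r c L : (r <= 1)%N -> trap_gf r c L = (2 ^ L)%:R.
Proof.
move=> hr; rewrite /trap_gf (eq_bigr (fun _ => 1)) => [|t _]; last by rewrite trap_count_small.
by rewrite sumr_const card_tuple card_bool natrX.
Qed.

Lemma trap_gf_cons r c L : (2 <= r)%N ->
  let r' := (r - (if c then 2 else 1))%N in
  trap_gf r c L.+1 = trap_gf r' true L + 'X^c * trap_gf r' false L.
Proof.
move=> hr /=; rewrite /trap_gf (big_tuple_cons L (fun t => 'X^(trap_count r c t))) big_bool /= hr.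
rewrite mulr_sumr.
congr (_ + _); apply: eq_bigr => t _; first by rewrite andbF add0n.
by rewrite andbT exprD.
Qed.

(* [trap_count r] reads at most [r] entries, so longer tuples only double the sum. *)
Lemma trap_gf_pad L r c : (r <= L)%N -> trap_gf r c L.+1 = trap_gf r c L *+ 2.
Proof.
elim: L r c => [|L IH] r c hr.
  by move: hr; rewrite leqn0 => /eqP ->; rewrite !trap_gf_small // -natrM.
have [r_small|r_big] := leqP r 1; first by rewrite !trap_gf_small // expnS natrM mulr_natl.
rewrite (trap_gf_cons c L.+1 r_big) (trap_gf_cons c L r_big) /= !IH; try by case: (c); lia.
by rewrite mulrnDl -mulrnAr.
Qed.

Lemma trap_gf_true_rec r :
  trap_gf r.+2 true r.+2 = trap_gf r true r *+ 2 + 'X * trap_gf r false r *+ 2.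
Proof. by rewrite trap_gf_cons //= !subSS subn0 expr1 !trap_gf_pad // -mulrnAr. Qed.

Lemma trap_gf_false_rec r :
  trap_gf r.+1 false r.+1 = trap_gf r true r + trap_gf r false r.
Proof.
case: r => [|r]; first by rewrite !trap_gf_small.
by rewrite trap_gf_cons //= subSS subn0 expr0 mul1r.
Qed.

Lemma Wpoly_succ k : Wpoly k.+1 = trap_gf k true k *+ 2.
Proof.
have sum_primary x : \sum_(t : k.-tuple bool) 'X^(nuW k.+1 (x :: t)) = trap_gf k true k.
  have flip_inj : injective (fun t : k.-tuple bool => map_tuple (fun p => p == x) t).
    have flipK : involutive (fun p => p == x) by case: x => -[].
    by move=> t1 t2 /(congr1 val) /(inj_map (inv_inj flipK)) /val_inj.
  rewrite /trap_gf [RHS](reindex_inj flip_inj); apply: eq_bigr => t _.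
  by rewrite nuW_primary ?size_tuple.
rewrite (_ : Wpoly k.+1 = \sum_(t : k.+1.-tuple bool) 'X^(nuW k.+1 t)) //.
by rewrite (big_tuple_cons k (fun t => 'X^(nuW k.+1 t))) big_bool !sum_primary.
Qed.

Lemma Wpoly_rec m : Wpoly m.+3 = Wpoly m.+2 + Wpoly m.+1 *+ 2 + ('X - 1) * Wpoly m *+ 2.
Proof.
case: m => [|k].
  by rewrite !Wpoly_succ trap_gf_true_rec !trap_gf_small //= /Wpoly /=; ring.
by rewrite !Wpoly_succ !trap_gf_true_rec trap_gf_false_rec; ring.
Qed.

Theorem corollary3 :
  forall m : nat, \sum_(i < m.+1) Dcoef i * Wpoly (m - i) = Ncoef m.
Proof.
case=> [|[|[|m]]]; rewrite !big_ord_recl ?big_ord0 /Dcoef /Ncoef /bump /=.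
- rewrite /Wpoly /=; ring.
- rewrite Wpoly_succ trap_gf_small // /Wpoly /=; ring.
- rewrite !Wpoly_succ !trap_gf_small // /Wpoly /=; ring.
rewrite big1 => [|i _]; last by rewrite nth_nil mul0r.
rewrite !subSS !subn0 Wpoly_rec nth_nil; ring.
Qed.
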